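(* Let $(G,\sigma)$ be a finite connected signed graph satisfying $CD^{\sigma}(0,N)$ for some $N\in(1,\infty]$. Then every nonzero eigenvalue $\lambda^{\sigma}$ of $\Delta^{\sigma}$ satisfies \[ \lambda^\sigma\geq \frac{1}{4\left(1+\sqrt{(N-1)/N}\right)}\cdot\frac{1}{d(D+1)\lceil (D+1)/2\rceil}, \] where $d$ is the maximal vertex degree and $D$ the diameter of $G$, and $\sqrt{(N-1)/N}:=1$ when $N=\infty$.
   Context: $G=(V,E)$ is a finite simple connected graph with degrees $d_x$; $\sigma:E\to\{\pm1\}$, $\sigma_{xy}=\sigma(\{x,y\})$. Signed Laplacian $\Delta^{\sigma}f(x)=\frac{1}{d_x}\sum_{y\sim x}(\sigma_{xy}f(y)-f(x))$; $\Delta$ is the case $\sigma\equiv+1$; eigenvalues: $-\Delta^\sigma f=\lambda f$, $f\ne0$. $\Gamma^{\sigma}(f,g)=\frac12\{\Delta(fg)-g\Delta^{\sigma}f-f\Delta^{\sigma}g\}$, $\Gamma_2^{\sigma}(f,g)=\frac12\{\Delta\Gamma^{\sigma}(f,g)-\Gamma^{\sigma}(g,\Delta^{\sigma}f)-\Gamma^{\sigma}(f,\Delta^{\sigma}g)\}$. $CD^{\sigma}(K,N)$ means $\Gamma_2^{\sigma}(f,f)(x)\ge\frac1N(\Delta^\sigma f)^2(x)+K\Gamma^\sigma(f,f)(x)$ for all $f:V\to\mathbb{R}$, $x\in V$ ($\frac1N=0$ if $N=\infty$). $\lceil\cdot\rceil$ is the ceiling. *)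

From HB Require Import structures.
From mathcomp Require Import all_boot all_order all_algebra.
From mathcomp Require Import reals.
Set Implicit Arguments. Unset Strict Implicit. Unset Printing Implicit Defensive.
Import Order.TTheory GRing.Theory Num.Theory.
Local Open Scope ring_scope.

Section SignedGraph.
Variable R : realType.
Variable T : finType.
Variable e : rel T.

Definition sg_simple := symmetric e /\ irreflexive e.
Definition sg_connected := forall x y : T, connect e x y.

Definition signature (sigma : T -> T -> R) :=
  forall x y, e x y -> sigma x y = sigma y x /\ (sigma x y = 1 \/ sigma x y = -1).

Definition deg (x : T) : nat := #|[set y | e x y]|.

Definition lapS (sigma : T -> T -> R) (f : T -> R) (x : T) : R :=
  (deg x)%:R^-1 * \sum_(y | e x y) (sigma x y * f y - f x).

Definition lap (f : T -> R) (x : T) : R := lapS (fun _ _ => 1) f x.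

Definition GammaS (sigma : T -> T -> R) (f g : T -> R) (x : T) : R :=
  2^-1 * (lap (fun z => f z * g z) x - g x * lapS sigma f x - f x * lapS sigma g x).

Definition Gamma2S (sigma : T -> T -> R) (f g : T -> R) (x : T) : R :=
  2^-1 * (lap (GammaS sigma f g) x
          - GammaS sigma g (lapS sigma f) x - GammaS sigma f (lapS sigma g) x).

(* N in (1, +oo] is represented by [N : option R], [None] = +oo *)
Definition invN (N : option R) : R := if N is Some n then n^-1 else 0.

Definition CD (sigma : T -> T -> R) (K : R) (N : option R) :=
  forall (f : T -> R) (x : T),
    Gamma2S sigma f f x >= invN N * (lapS sigma f x) ^+ 2 + K * GammaS sigma f f x.

Definition sg_eigenvalue (sigma : T -> T -> R) (lam : R) :=
  exists f : T -> R, (exists x, f x != 0) /\ forall x, - lapS sigma f x = lam * f x.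

Definition max_deg : nat := \max_(x : T) deg x.

Definition walk_len (n : nat) (x y : T) : bool :=
  [exists p : n.-tuple T, path e x p && (last x p == y)].

(* graph distance: least n with a walk of length n from x to y
   (for a connected graph it is < #|T|) *)
Definition dist (x y : T) : nat := find (fun n => walk_len n x y) (iota 0 #|T|).

Definition diameter : nat := \max_(x : T) \max_(y : T) dist x y.

Definition sqrtN (N : option R) : R :=
  if N is Some n then Num.sqrt ((n - 1) / n) else 1.

Definition N_gt1 (N : option R) : Prop := if N is Some n then 1 < n else True.

End SignedGraph.

From HB Require Import structures.
From mathcomp Require Import all_boot all_order all_algebra.
From mathcomp Require Import reals lra ring.

Set Implicit Arguments. Unset Strict Implicit. Unset Printing Implicit Defensive.
Import Order.TTheory GRing.Theory Num.Theory.
Local Open Scope ring_scope.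

(* Rescale an eigenfunction f so that f x0 = M = max |f| > 0; testing the
   eigenvalue equation at x0 gives lam >= 0, hence lam > 0.  The maximum principle for
   Gamma(f) + (1 + s) lam f^2, s = sqrt((N-1)/N), combined with CD(0,N) at the
   maximum point, bounds Gamma(f) by 2 (1 + s) lam M^2, hence the local energy
   sum_{w~v} (sigma_vw f w - f v)^2 by 4 d (1 + s) lam M^2 =: S.
   Along a non-backtracking walk two consecutive increments sit at distinct
   edges of a common vertex, so their squares add up to at most S, and a walk
   of length n moves the signed value of f by at most sqrt(n (n+1) S / 2).
   At a vertex y0 where |f| is minimal, lam > 0 forces a neighbour z at which
   the signed value of f has the opposite sign; a shortest walk to z and a
   shortest walk to y0 followed by the edge y0 z change the value by M - |f z|
   and M + |f z|, which gives 2 M^2 <= (D+1)^2 S.  Finally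
   (D+1)^2 <= 2 (D+1) ceil((D+1)/2). *)

Section SquareSums.
Variable R : realDomainType.

Lemma sqr_sum_le_size (s : seq R) :
  (\sum_(a <- s) a) ^+ 2 <= (size s)%:R * \sum_(a <- s) a ^+ 2.
Proof.
elim: s => [|a t IH]; first by rewrite !big_nil expr0n mul0r.
rewrite !big_cons /= -natr1.
case: t IH => [|b t] IH; first by rewrite !big_nil /=; lra.
move: IH; set A := \sum_(c <- _) c; set Q := \sum_(c <- _) c ^+ 2.
set n := (size _)%:R => IH.
have n_gt0 : 0 < n by rewrite ltr0n.
have : 0 <= n * ((n + 1) * (a ^+ 2 + Q) - (a + A) ^+ 2).
  have -> : n * ((n + 1) * (a ^+ 2 + Q) - (a + A) ^+ 2)
          = (n * a - A) ^+ 2 + (n + 1) * (n * Q - A ^+ 2) by ring.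
  by rewrite addr_ge0 ?sqr_ge0 // mulr_ge0 ?subr_ge0 // addr_ge0 ?ler01 ?ltW.
by rewrite pmulr_rge0 // subr_ge0.
Qed.

Lemma sum_sqr_le_path (S a : R) (t : seq R) :
  path (fun b c => b ^+ 2 + c ^+ 2 <= S) a t ->
  2 * \sum_(b <- a :: t) b ^+ 2 <= (size t)%:R * S + a ^+ 2 + (last a t) ^+ 2.
Proof.
elim: t a => [|b t IH] a /=; first by rewrite big_cons big_nil mul0r add0r; lra.
by case/andP=> ab /IH; rewrite !big_cons -natr1; lra.
Qed.

Lemma sqr_sum_le_sorted (S : R) (s : seq R) :
  all (fun a => a ^+ 2 <= S) s -> sorted (fun a b => a ^+ 2 + b ^+ 2 <= S) s ->
  2 * (\sum_(a <- s) a) ^+ 2 <= (size s * (size s).+1)%:R * S.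
Proof.
case: s => [|a t] s_le /=; first by rewrite big_nil expr0n mulr0 mul0r.
move=> /sum_sqr_le_path sum_le.
have /= cs := sqr_sum_le_size (a :: t).
set A := \sum_(b <- _) b in cs *; set Q := \sum_(b <- _) b ^+ 2 in cs sum_le.
have a_le : a ^+ 2 <= S by case/andP: s_le.
have last_le : (last a t) ^+ 2 <= S by apply: (allP s_le); apply: mem_last.
have Q_le : 2 * Q <= (size t).+2%:R * S by rewrite -addn2 natrD mulrDl; lra.
rewrite natrM -mulrA; apply: le_trans _ (ler_wpM2l (ler0n _ _) Q_le); lra.
Qed.

End SquareSums.

Section ShortPaths.
Variables (T : finType) (e : rel T).

Lemma size_shorten (x : T) (p : seq T) : (size (shorten x p) <= size p)%N.
Proof.
elim: p x => [|y p IH] x //=.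
by case: ifP => _ /=; [apply: leq_trans (IH x) (leqnSn _) | rewrite ltnS IH].
Qed.

Lemma walk_len_uniq n x y : walk_len e n x y ->
  exists p, [/\ path e x p, last x p = y, uniq (x :: p) & (size p <= n)%N].
Proof.
case/existsP=> t /andP[t_path /eqP t_last].
have := size_shorten x t; rewrite size_tuple -t_last.
by case: (shortenP t_path) => p; exists p.
Qed.

Lemma walk_len_dist x y : connect e x y -> walk_len e (dist e x y) x y.
Proof.
case/connectP=> p p_path ->; case: (shortenP p_path) => q q_path q_uniq _.
have q_lt : (size q < #|T|)%N by move/card_uniqP: q_uniq => /= <-; apply: max_card.
have has_walk : has (fun n => walk_len e n x (last x q)) (iota 0 #|T|).
  apply/hasP; exists (size q); first by rewrite mem_iota.
  by apply/existsP; exists (in_tuple q); rewrite /= q_path eqxx.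
have := nth_find 0 has_walk; rewrite /dist nth_iota //.
by move: has_walk; rewrite has_find size_iota.
Qed.

Lemma dist_le_diameter x y : (dist e x y <= diameter e)%N.
Proof.
apply: leq_trans (leq_bigmax x).
exact: (leq_bigmax (F := fun y => dist e x y) y).
Qed.

Lemma exists_short_path x y : connect e x y ->
  exists p, [/\ path e x p, last x p = y, uniq (x :: p) & (size p <= diameter e)%N].
Proof.
move/walk_len_dist/walk_len_uniq=> [p [p_path p_last p_uniq p_size]].
by exists p; split=> //; apply: leq_trans p_size (dist_le_diameter x y).
Qed.

End ShortPaths.

Section Walks.
Variables (R : realType) (T : finType) (e : rel T) (sigma : T -> T -> R).
Hypothesis sigma_sign : signature e sigma.

Lemma signature_sqr x y : e x y -> sigma x y ^+ 2 = 1.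
Proof. by case/sigma_sign=> _ [] ->; rewrite ?sqrrN expr1n. Qed.

Lemma signature_norm x y : e x y -> `|sigma x y| = 1.
Proof. by case/sigma_sign=> _ [] ->; rewrite ?normrN normr1. Qed.

Fixpoint walk_sign (x : T) (p : seq T) : R :=
  if p is y :: p' then sigma x y * walk_sign y p' else 1.

Fixpoint nonbacktracking (x : T) (p : seq T) : bool :=
  if p is y :: p' then (if p' is z :: _ then x != z else true) && nonbacktracking y p'
  else true.

Lemma walk_sign_rcons x p z :
  walk_sign x (rcons p z) = walk_sign x p * sigma (last x p) z.
Proof. by elim: p x => [|y p IH] x /=; rewrite ?mul1r ?mulr1 // IH mulrA. Qed.

Lemma norm_walk_sign x p : path e x p -> `|walk_sign x p| = 1.
Proof.
elim: p x => [|y p IH] x /=; first by rewrite normr1.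
by case/andP=> /signature_norm xy /IH; rewrite normrM xy => ->; rewrite mulr1.
Qed.

Lemma walk_sign_backtrack x q y : e (last x q) y ->
  walk_sign x (rcons q y) * sigma y (last x q) = walk_sign x q.
Proof.
move=> xy; have [sym _] := sigma_sign xy.
by rewrite walk_sign_rcons -mulrA -sym -expr2 signature_sqr ?mulr1.
Qed.

Lemma uniq_nonbacktracking x p : uniq (x :: p) -> nonbacktracking x p.
Proof.
elim: p x => [|y p IH] x //= /andP[x_notin /IH ->]; rewrite andbT.
by case: p x_notin {IH} => [|z p] //; rewrite !inE !negb_or => /and3P[].
Qed.

Lemma nonbacktracking_rcons2 x q y z :
  nonbacktracking x (rcons (rcons q y) z) =
  nonbacktracking x (rcons q y) && (last x q != z).
Proof.
elim: q x => [|a q IH] x /=; first by rewrite andbT.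
by rewrite IH andbA; case: q {IH}.
Qed.

Variable f : T -> R.

Definition gradsq (v : T) : R := \sum_(w | e v w) (sigma v w * f w - f v) ^+ 2.

Fixpoint walk_diffs (x : T) (p : seq T) : seq R :=
  if p is y :: p' then `|sigma x y * f y - f x| :: walk_diffs y p' else [::].

Definition transport (x : T) (p : seq T) : R := walk_sign x p * f (last x p).

Lemma size_walk_diffs x p : size (walk_diffs x p) = size p.
Proof. by elim: p x => [|y p IH] x //=; rewrite IH. Qed.

Lemma norm_transport x p : path e x p -> `|transport x p| = `|f (last x p)|.
Proof. by move=> p_path; rewrite normrM norm_walk_sign ?mul1r. Qed.

Lemma norm_sub_transport_le x p :
  path e x p -> `|f x - transport x p| <= \sum_(d <- walk_diffs x p) d.
Proof.
rewrite /transport; elim: p x => [|y p IH] x /=.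
  by rewrite mul1r subrr normr0 big_nil.
case/andP=> xy /IH y_le; rewrite big_cons.
have -> : f x - sigma x y * walk_sign y p * f (last y p)
        = (f x - sigma x y * f y) + sigma x y * (f y - walk_sign y p * f (last y p)).
  by ring.
apply: le_trans (ler_normD _ _) _.
by rewrite normrM signature_norm // mul1r distrC lerD.
Qed.

Lemma transport_rcons x p z :
  transport x (rcons p z) = walk_sign x p * sigma (last x p) z * f z.
Proof. by rewrite /transport walk_sign_rcons last_rcons. Qed.

Lemma nonbacktracking_extension x p z :
  path e x p -> uniq (x :: p) -> e (last x p) z ->
  exists W, [/\ path e x W, nonbacktracking x W, (size W <= (size p).+1)%N
              & transport x W = transport x (rcons p z)].
Proof.
move=> p_path p_uniq pz.
have [pz_nb | pz_back] := boolP (nonbacktracking x (rcons p z)).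
  by exists (rcons p z); rewrite rcons_path p_path pz size_rcons.
case/lastP: p p_path p_uniq pz pz_back => [|q y] p_path p_uniq yz //.
rewrite nonbacktracking_rcons2 (uniq_nonbacktracking p_uniq) negbK => /eqP q_last.
move: p_path p_uniq; rewrite rcons_path -rcons_cons rcons_uniq.
case/andP=> q_path qy /andP[_ q_uniq]; exists q; split=> //.
- exact: uniq_nonbacktracking.
- by rewrite size_rcons leqW.
by rewrite transport_rcons last_rcons /transport -(walk_sign_backtrack qy) q_last.
Qed.

Lemma gradsq_ge0 v : 0 <= gradsq v.
Proof. by apply: sumr_ge0 => w _; apply: sqr_ge0. Qed.

Lemma sqr_diff_sym x y : e x y ->
  (sigma x y * f y - f x) ^+ 2 = (sigma y x * f x - f y) ^+ 2.
Proof.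
move=> xy; have [<- _] := sigma_sign xy; apply/eqP; rewrite -subr_eq0; apply/eqP.
transitivity ((sigma x y ^+ 2 - 1) * (f y ^+ 2 - f x ^+ 2)); first by ring.
by rewrite signature_sqr // subrr mul0r.
Qed.

Lemma sqr_diff_le_gradsq v w : e v w -> (sigma v w * f w - f v) ^+ 2 <= gradsq v.
Proof.
move=> vw; rewrite /gradsq (bigD1 w) //= lerDl.
by apply: sumr_ge0 => u _; apply: sqr_ge0.
Qed.

Lemma sqr_diff2_le_gradsq v a b : e v a -> e v b -> a != b ->
  (sigma v a * f a - f v) ^+ 2 + (sigma v b * f b - f v) ^+ 2 <= gradsq v.
Proof.
move=> va vb ab; rewrite /gradsq (bigD1 a) //= (bigD1 b) /=; last by rewrite vb eq_sym.
by rewrite addrA lerDl; apply: sumr_ge0 => u _; apply: sqr_ge0.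
Qed.

Hypothesis e_sym : symmetric e.
Variable Sm : R.
Hypothesis gradsq_le : forall v, gradsq v <= Sm.

Lemma walk_diffs_le x p :
  path e x p -> all (fun d => d ^+ 2 <= Sm) (walk_diffs x p).
Proof.
elim: p x => [|y p IH] x //= /andP[xy /IH ->]; rewrite andbT real_normK ?num_real //.
exact: le_trans (sqr_diff_le_gradsq xy) (gradsq_le x).
Qed.

Lemma sorted_walk_diffs x p : path e x p -> nonbacktracking x p ->
  sorted (fun a b => a ^+ 2 + b ^+ 2 <= Sm) (walk_diffs x p).
Proof.
elim: p x => [|y p IH] x //=.
case: p IH => [|z p] IH //= /and3P[xy yz z_path] /andP[xz y_nb].
have /= -> := IH y; rewrite ?yz ?andbT //.
rewrite !real_normK ?num_real // sqr_diff_sym //.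
apply: le_trans (gradsq_le y); apply: sqr_diff2_le_gradsq => //.
by rewrite e_sym.
Qed.

Lemma sqr_sub_transport_le x p n : path e x p -> nonbacktracking x p ->
  (size p <= n)%N -> 2 * (f x - transport x p) ^+ 2 <= (n * n.+1)%:R * Sm.
Proof.
move=> p_path p_nb p_size.
have Sm_ge0 : 0 <= Sm := le_trans (gradsq_ge0 x) (gradsq_le x).
have := sqr_sum_le_sorted (walk_diffs_le p_path) (sorted_walk_diffs p_path p_nb).
rewrite size_walk_diffs => sum_le; apply: le_trans (le_trans _ sum_le) _.
  rewrite ler_pM2l // -real_normK ?num_real // ler_sqr ?nnegrE //.
    exact: norm_sub_transport_le.
  exact: le_trans (norm_sub_transport_le p_path).
by rewrite ler_wpM2r // ler_nat leq_mul.
Qed.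

End Walks.

Section CarreDuChamp.
Variables (R : realType) (T : finType) (e : rel T).

Lemma lapSZ (s : T -> T -> R) (g h : T -> R) c x :
  (forall y, g y = c * h y) -> lapS e s g x = c * lapS e s h x.
Proof.
move=> g_eq; rewrite /lapS mulrCA; congr (_ * _); rewrite mulr_sumr.
by apply: eq_bigr => y _; rewrite !g_eq; ring.
Qed.

Lemma lapDZ (g h : T -> R) c x :
  lap e (fun y => g y + c * h y) x = lap e g x + c * lap e h x.
Proof.
rewrite /lap /lapS mulrCA -mulrDr; congr (_ * _).
by rewrite mulr_sumr -big_split; apply: eq_bigr => y _ /=; ring.
Qed.

Lemma lap_le0_at_max (g : T -> R) x : (forall y, g y <= g x) -> lap e g x <= 0.
Proof.
move=> g_max; rewrite /lap /lapS mulr_ge0_le0 ?invr_ge0 //.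
by apply: sumr_le0 => y _; rewrite mul1r subr_le0.
Qed.

Variable sigma : T -> T -> R.
Hypothesis sigma_sign : signature e sigma.

Lemma GammaSZ (f g : T -> R) c x :
  (forall y, g y = c * f y) -> GammaS e sigma f g x = c * GammaS e sigma f f x.
Proof.
move=> g_eq; have fg_eq y : f y * g y = c * (f y * f y) by rewrite g_eq; ring.
by rewrite /GammaS /lap (lapSZ _ _ fg_eq) (lapSZ _ _ g_eq) g_eq; ring.
Qed.

Lemma gradsq_GammaS (f : T -> R) x :
  gradsq e sigma f x = 2 * (deg e x)%:R * GammaS e sigma f f x.
Proof.
have [deg0 | deg_gt0] := posnP (deg e x).
  rewrite deg0 mulr0 mul0r /gradsq big_pred0 // => y.
  by move/card0_eq/(_ y): deg0; rewrite inE.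
have -> : gradsq e sigma f x =
    \sum_(y | e x y) (1 * (f y * f y) - f x * f x)
    - 2 * f x * \sum_(y | e x y) (sigma x y * f y - f x).
  rewrite mulr_sumr -sumrB; apply: eq_bigr => y xy.
  transitivity ((sigma x y ^+ 2 - 1) * f y ^+ 2 + (1 * (f y * f y) - f x * f x)
                - 2 * f x * (sigma x y * f y - f x)); first by ring.
  by rewrite (signature_sqr sigma_sign xy) subrr mul0r add0r.
by rewrite /GammaS /lap /lapS; field; rewrite pnatr_eq0 -lt0n.
Qed.

End CarreDuChamp.

Section DimensionParameter.
Variable R : realType.

Lemma sqrtN_gt0 (N : option R) : N_gt1 N -> 0 < sqrtN N.
Proof.
by case: N => [n|] //= n_gt1; rewrite sqrtr_gt0 divr_gt0 ?subr_gt0 // (lt_trans ltr01).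
Qed.

Lemma invN_sqrtN (N : option R) : N_gt1 N -> invN N = 1 - sqrtN N ^+ 2.
Proof.
case: N => [n|] /= n_gt1; last by rewrite expr1n subrr.
have n_gt0 : 0 < n by apply: lt_trans n_gt1.
by rewrite sqr_sqrtr ?divr_ge0 ?subr_ge0 ?ltW //; field; rewrite gt_eqF.
Qed.

End DimensionParameter.

Section GradientEstimate.
Variables (R : realType) (T : finType) (e : rel T) (sigma : T -> T -> R).
Variables (N : option R) (f : T -> R) (lam : R).
Hypotheses (cd : CD e sigma 0 N) (gt1_N : N_gt1 N).
Hypothesis eigen : forall y, - lapS e sigma f y = lam * f y.
Hypothesis lam_gt0 : 0 < lam.

Local Notation G := (GammaS e sigma f f).

Lemma lapS_eigen y : lapS e sigma f y = - lam * f y.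
Proof. by rewrite mulNr -eigen opprK. Qed.

Lemma Gamma2S_eigen z : Gamma2S e sigma f f z = 2^-1 * lap e G z + lam * G z.
Proof. by rewrite /Gamma2S !(GammaSZ _ _ _ lapS_eigen); field. Qed.

Lemma lap_sqr_eigen z : lap e (fun y => f y * f y) z = 2 * G z - 2 * lam * f z ^+ 2.
Proof. by rewrite /GammaS lapS_eigen; field. Qed.

(* Among all weights in front of [lam f^2], 1 + sqrtN N minimises the bound
   of GammaS_eigen_le. *)
Lemma GammaS_le_at_max x :
  (forall y, G y + (1 + sqrtN N) * lam * f y ^+ 2 <= G x + (1 + sqrtN N) * lam * f x ^+ 2) ->
  G x <= (1 + sqrtN N) * lam * f x ^+ 2.
Proof.
move=> x_max; set u := sqrtN N in x_max *.
have := @lap_le0_at_max _ _ e (fun y => G y + (1 + u) * lam * (f y * f y)) x x_max.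
rewrite lapDZ lap_sqr_eigen => lap_le0.
have := cd f x; rewrite Gamma2S_eigen lapS_eigen mul0r addr0 invN_sqrtN // -/u => cd_x.
have u_lam_gt0 : 0 < u * lam by rewrite mulr_gt0 ?sqrtN_gt0.
rewrite -(ler_pM2l u_lam_gt0); nra.
Qed.

Lemma GammaS_eigen_le M : (forall y, `|f y| <= M) ->
  forall y, G y <= 2 * (1 + sqrtN N) * lam * M ^+ 2.
Proof.
move=> f_le y; set u := sqrtN N.
have u_ge0 : 0 <= u := ltW (sqrtN_gt0 gt1_N).
pose F z := G z + (1 + u) * lam * f z ^+ 2.
have [x _ x_max] := @arg_maxP _ R T y xpredT F isT.
have Gx_le : G x <= (1 + u) * lam * f x ^+ 2 := GammaS_le_at_max (fun z => x_max z isT).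
have fx_le : (1 + u) * lam * f x ^+ 2 <= (1 + u) * lam * M ^+ 2.
  apply: ler_wpM2l; first by rewrite mulr_ge0 ?addr_ge0 ?ler01 ?(ltW lam_gt0).
  by rewrite -real_normK ?num_real // lerXn2r ?nnegrE ?(le_trans _ (f_le x)).
have Gy_le : G y <= F y.
  by rewrite lerDl mulr_ge0 ?sqr_ge0 ?mulr_ge0 ?addr_ge0 ?ler01 ?(ltW lam_gt0).
have /= := x_max y isT; rewrite /F in Gy_le *; lra.
Qed.

End GradientEstimate.

Section Eigenfunctions.
Variables (R : realType) (T : finType) (e : rel T) (sigma : T -> T -> R).
Hypothesis sigma_sign : signature e sigma.

Lemma eigenfunction_peak lam : sg_eigenvalue e sigma lam ->
  exists f x0, [/\ forall y, - lapS e sigma f y = lam * f y, 0 < f x0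
                 & forall y, `|f y| <= f x0].
Proof.
case=> f [[x fx_neq0] eigen].
have [x0 _ x0_max] := @arg_maxP _ R T x xpredT (fun y => `|f y|) isT.
have fx0_neq0 : f x0 != 0.
  by rewrite -normr_gt0 (lt_le_trans _ (x0_max x isT)) ?normr_gt0.
exists (fun y => Num.sg (f x0) * f y), x0; split.
- by move=> y; rewrite (lapSZ _ _ (h := f) (c := Num.sg (f x0))) // -mulrN eigen mulrCA.
- by rewrite -normrEsg normr_gt0.
- by move=> y; rewrite -normrEsg normrM normr_sg fx0_neq0 mul1r; apply: x0_max.
Qed.

Lemma eigenvalue_ge0 f lam x0 : (forall y, - lapS e sigma f y = lam * f y) ->
  0 < f x0 -> (forall y, `|f y| <= f x0) -> 0 <= lam.
Proof.
move=> eigen fx0_gt0 f_le; rewrite -(pmulr_lge0 _ fx0_gt0) -eigen /lapS -mulrN.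
rewrite mulr_ge0 ?invr_ge0 // -sumrN sumr_ge0 // => y xy.
rewrite opprB subr_ge0; apply: le_trans (ler_norm _) _.
by rewrite normrM (signature_norm sigma_sign xy) mul1r.
Qed.

End Eigenfunctions.

Section PeakBound.
Variables (R : realType) (T : finType) (e : rel T) (sigma : T -> T -> R).
Hypotheses (sigma_sign : signature e sigma) (e_sym : symmetric e).
Variables (f : T -> R) (lam Sm : R) (x0 : T).
Hypothesis eigen : forall y, - lapS e sigma f y = lam * f y.
Hypothesis lam_gt0 : 0 < lam.
Hypothesis x0_connected : forall y, connect e x0 y.
Hypothesis f_le : forall y, `|f y| <= f x0.
Hypothesis gradsq_le : forall v, gradsq e sigma f v <= Sm.

Lemma exists_sign_flip_neighbour y0 s : (forall z, `|f y0| <= `|f z|) ->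
  `|s| = 1 -> 0 < s * f y0 -> exists2 z, e y0 z & s * sigma y0 z * f z = - `|f z|.
Proof.
move=> y0_min s_norm sf_gt0.
have lap_lt0 : s * lapS e sigma f y0 < 0.
  by rewrite -[lapS _ _ _ _]opprK eigen mulrN oppr_lt0 mulrCA mulr_gt0.
have /existsP[z /andP[y0z z_lt]] :
    [exists z, e y0 z && (s * sigma y0 z * f z < s * f y0)].
  apply: contraLR lap_lt0 => /existsPn none_lt; rewrite -leNgt.
  rewrite /lapS mulrCA mulr_ge0 ?invr_ge0 // mulr_sumr sumr_ge0 // => z y0z.
  by have := none_lt z; rewrite y0z -leNgt mulrBr mulrA subr_ge0.
exists z => //.
have sfz_norm : `|s * sigma y0 z * f z| = `|f z|.
  by rewrite !normrM s_norm (signature_norm sigma_sign y0z) !mul1r.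
have sfz_lt : s * sigma y0 z * f z < `|f z|.
  apply: lt_le_trans z_lt _.
  by rewrite -[s * f y0]gtr0_norm // normrM s_norm mul1r y0_min.
have [sfz_lt0 | sfz_ge0] := ltrP (s * sigma y0 z * f z) 0.
  by rewrite -sfz_norm ltr0_norm ?opprK.
by move: sfz_lt; rewrite -sfz_norm ger0_norm // ltxx.
Qed.

Lemma sqr_peak_le_nonpos p n : path e x0 p -> nonbacktracking x0 p ->
  (size p <= n)%N -> transport sigma f x0 p <= 0 -> 2 * f x0 ^+ 2 <= (n * n.+1)%:R * Sm.
Proof.
move=> p_path p_nb p_size t_le0.
apply: le_trans (sqr_sub_transport_le sigma_sign e_sym gradsq_le p_path p_nb p_size).
have fx0_ge0 : 0 <= f x0 := le_trans (normr_ge0 _) (f_le x0).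
by rewrite ler_pM2l // lerXn2r ?nnegrE //; lra.
Qed.

Lemma sqr_peak_le : 2 * f x0 ^+ 2 <= ((diameter e).+1 ^ 2)%:R * Sm.
Proof.
set D := diameter e.
have Sm_ge0 : 0 <= Sm := le_trans (gradsq_ge0 e sigma f x0) (gradsq_le x0).
have nonpos p : path e x0 p -> uniq (x0 :: p) -> (size p <= D)%N ->
    transport sigma f x0 p <= 0 -> 2 * f x0 ^+ 2 <= (D.+1 ^ 2)%:R * Sm.
  move=> p_path /uniq_nonbacktracking p_nb p_size t_le0.
  apply: le_trans (sqr_peak_le_nonpos p_path p_nb p_size t_le0) _.
  by rewrite ler_wpM2r // ler_nat leq_mul.
have [y0 _ y0_min] := @arg_minP _ R T x0 xpredT (fun y => `|f y|) isT.
have [p0 [p0_path p0_last p0_uniq p0_size]] := exists_short_path (x0_connected y0).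
have [|p0_pos] := lerP (transport sigma f x0 p0) 0; first exact: nonpos.
have sign_f_gt0 : 0 < walk_sign sigma x0 p0 * f y0 by rewrite -p0_last.
have [z y0z flip] := exists_sign_flip_neighbour (fun z => y0_min z isT)
  (norm_walk_sign sigma_sign p0_path) sign_f_gt0.
have [pz [pz_path pz_last pz_uniq pz_size]] := exists_short_path (x0_connected z).
have [|pz_pos] := lerP (transport sigma f x0 pz) 0; first exact: nonpos.
have pz_transport : transport sigma f x0 pz = `|f z|.
  by rewrite -pz_last -(norm_transport sigma_sign) // gtr0_norm.
rewrite -p0_last in y0z flip.
have [W [W_path W_nb W_size W_transport]] :=
  nonbacktracking_extension sigma_sign f p0_path p0_uniq y0z.
rewrite transport_rcons flip in W_transport.
have W_size' : (size W <= D.+1)%N by apply: leq_trans W_size _; rewrite ltnS.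
have := sqr_sub_transport_le sigma_sign e_sym gradsq_le W_path W_nb W_size'.
have := sqr_sub_transport_le sigma_sign e_sym gradsq_le pz_path
  (uniq_nonbacktracking pz_uniq) pz_size.
rewrite W_transport pz_transport !natrM -!natr1 /=.
have := sqr_ge0 `|f z|; nra.
Qed.

End PeakBound.

Lemma sqr_le_ceil_half (R : archiFieldType) (n : nat) :
  (n ^ 2)%:R <= 2 * n%:R * (Num.ceil (n%:R / 2 : R))%:~R :> R.
Proof.
have half_le : n%:R <= 2 * (Num.ceil (n%:R / 2 : R))%:~R :> R.
  by rewrite -ler_pdivrMl // mulrC ceil_ge.
by rewrite natrX expr2 mulrAC; apply: ler_wpM2r.
Qed.

Unset Implicit Arguments.

Theorem corollary3p9 (R : realType) (T : finType) (e : rel T)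
  (sigma : T -> T -> R) (N : option R) (lam : R) :
  sg_simple e -> sg_connected e -> signature e sigma ->
  N_gt1 N -> CD e sigma 0 N ->
  sg_eigenvalue e sigma lam -> lam != 0 ->
  lam >= (4 * (1 + sqrtN N))^-1 *
         ((max_deg e)%:R * (diameter e).+1%:R
          * (Num.ceil ((diameter e).+1%:R / 2 : R))%:~R)^-1.
Proof.
move=> [e_sym _] connected sigma_sign gt1_N cd /eigenfunction_peak.
case=> f [x0 [eigen fx0_gt0 f_le]] lam_neq0.
have lam_gt0 : 0 < lam.
  by rewrite lt_def lam_neq0 (eigenvalue_ge0 sigma_sign eigen fx0_gt0 f_le).
set u := sqrtN N; set d := max_deg e; set D := diameter e.
set c : R := (Num.ceil (D.+1%:R / 2 : R))%:~R.
have u_ge0 : 0 <= u := ltW (sqrtN_gt0 gt1_N).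
set K := 2 * (1 + u) * lam * f x0 ^+ 2.
have K_ge0 : 0 <= K.
  by rewrite /K mulr_ge0 ?sqr_ge0 // !mulr_ge0 ?addr_ge0 ?ler01 ?(ltW lam_gt0).
have gradsq_le v : gradsq e sigma f v <= 2 * d%:R * K.
  rewrite (gradsq_GammaS sigma_sign) -!mulrA ler_pM2l //.
  apply: le_trans (ler_wpM2l (ler0n _ _) (GammaS_eigen_le cd gt1_N eigen lam_gt0 f_le v)) _.
  by rewrite -/u -/K ler_wpM2r // ler_nat; apply: (leq_bigmax (F := deg e)).
have := sqr_peak_le sigma_sign e_sym eigen lam_gt0 (fun y => connected x0 y) f_le gradsq_le.
rewrite -/D /K => peak_le.
have one_le : 1 <= (D.+1 ^ 2)%:R * d%:R * (2 * (1 + u)) * lam.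
  have fx0_sqr_gt0 : 0 < 2 * f x0 ^+ 2 by rewrite mulr_gt0 ?exprn_gt0.
  by rewrite -(ler_pM2l fx0_sqr_gt0) mulr1; lra.
set P := 4 * (1 + u) * (d%:R * D.+1%:R * c).
have one_le_P : 1 <= P * lam.
  apply: le_trans one_le _; rewrite ler_pM2r //.
  have := sqr_le_ceil_half R D.+1; rewrite -/c => ceil_le.
  have : 0 <= d%:R * (1 + u) by rewrite mulr_ge0 ?addr_ge0 ?ler01.
  rewrite /P; nra.
have P_gt0 : 0 < P.
  by rewrite -(pmulr_lgt0 _ lam_gt0); apply: lt_le_trans ltr01 one_le_P.
by rewrite -invfM -[P^-1]mulr1 ler_pdivrMl.
Qed.
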